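(* The Sorgenfrey line $\mathbb S$ is strongly discrete homogeneous.
   Context: The Sorgenfrey line is $\mathbb R$ with the topology generated by half-open intervals $[a,b)$. A subset $D$ of $X$ is discrete if each point of $X$ has a neighbourhood containing at most one point of $D$. A Hausdorff space $X$ is strongly discrete homogeneous (sDH) if for any two discrete subsets $A,B$ of $X$ and any bijection $f\colon A\to B$, $f$ extends to a homeomorphism of $X$ onto itself. *)

From Stdlib Require Import Reals.
Open Scope R_scope.

(** The Sorgenfrey topology on R: generated by half-open intervals [a,b).
    A set U is open iff every x in U has some b > x with [x,b) contained in U. *)
Definition sorg_open (U : R -> Prop) : Prop :=
  forall x, U x -> exists b, x < b /\ (forall y, x <= y < b -> U y).

Definition sorg_continuous (f : R -> R) : Prop :=
  forall U, sorg_open U -> sorg_open (fun x => U (f x)).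

Definition sorg_homeomorphism (h : R -> R) : Prop :=
  exists g : R -> R,
    (forall x, g (h x) = x) /\ (forall y, h (g y) = y) /\
    sorg_continuous h /\ sorg_continuous g.

Definition sorg_hausdorff : Prop :=
  forall x y, x <> y -> exists U V, sorg_open U /\ sorg_open V /\ U x /\ V y /\
    (forall z, U z -> V z -> False).

Definition sorg_discrete (D : R -> Prop) : Prop :=
  forall x, exists U, sorg_open U /\ U x /\
    (forall d1 d2, D d1 -> D d2 -> U d1 -> U d2 -> d1 = d2).

Definition bij_between (A B : R -> Prop) (f : R -> R) : Prop :=
  (forall a, A a -> B (f a)) /\
  (forall a1 a2, A a1 -> A a2 -> f a1 = f a2 -> a1 = a2) /\
  (forall b, B b -> exists a, A a /\ f a = b).

Definition sorgenfrey_sDH : Prop :=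
  sorg_hausdorff /\
  forall (A B : R -> Prop) (f : R -> R),
    sorg_discrete A -> sorg_discrete B -> bij_between A B f ->
    exists h : R -> R, sorg_homeomorphism h /\ (forall a, A a -> h a = f a).

From Stdlib Require Import Reals Lra Classical ClassicalEpsilon.
Open Scope R_scope.

(* Choose r x > 0 such that (x, x + r x) misses A ∪ B.  For p ∈ A ∪ B the
   half-open "slots" [p, p + r p / 2) and [p + r p / 2, p + r p) are then
   pairwise disjoint, and no slot starts in a small right neighbourhood of any
   point.  Exchanging initial pieces of pairs of slots by translations is an
   involution that is locally a translation, hence a Sorgenfrey homeomorphism.
   A first exchange parks every a ∈ A in its own second slot, a second one
   moves it from there to f a.  Two steps are needed because f may have
   cycles, which a single involution cannot realise. *)

Lemma sorg_open_Ico a b : sorg_open (fun z => a <= z < b).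
Proof. intros x Hx. exists b. split; [lra | intros; lra]. Qed.

Lemma sorg_hausdorff_holds : sorg_hausdorff.
Proof.
  intros x y Hxy.
  destruct (Rtotal_order x y) as [H|[H|H]]; [| contradiction |].
  - exists (fun z => x <= z < y), (fun z => y <= z < y + 1).
    repeat split; try apply sorg_open_Ico; try lra. intros; lra.
  - exists (fun z => x <= z < x + 1), (fun z => y <= z < x).
    repeat split; try apply sorg_open_Ico; try lra. intros; lra.
Qed.

Lemma sorg_continuous_comp f g :
  sorg_continuous f -> sorg_continuous g -> sorg_continuous (fun x => g (f x)).
Proof. intros Hf Hg U HU. apply (Hf (fun y => U (g y))), Hg, HU. Qed.

Lemma sorg_homeomorphism_comp f g :
  sorg_homeomorphism f -> sorg_homeomorphism g ->
  sorg_homeomorphism (fun x => g (f x)).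
Proof.
  intros [f' [Hf1 [Hf2 [Cf Cf']]]] [g' [Hg1 [Hg2 [Cg Cg']]]].
  exists (fun y => f' (g' y)). repeat split.
  - intro x. rewrite Hg1. apply Hf1.
  - intro y. rewrite Hf2. apply Hg2.
  - now apply sorg_continuous_comp.
  - now apply sorg_continuous_comp.
Qed.

Lemma sorg_continuous_of_local_translations h :
  (forall x, exists d c, 0 < d /\ forall y, x <= y < x + d -> h y = y + c) ->
  sorg_continuous h.
Proof.
  intros Htr U HU x Ux.
  destruct (Htr x) as [d [c [Hd Hc]]].
  destruct (HU (h x) Ux) as [b [Hb HbU]].
  assert (hx : h x = x + c) by (apply Hc; lra).
  assert (0 < Rmin d (b - h x)) by (apply Rmin_pos; lra).
  pose proof (Rmin_l d (b - h x)). pose proof (Rmin_r d (b - h x)).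
  exists (x + Rmin d (b - h x)). split; [lra|].
  intros y Hy. apply HbU. rewrite (Hc y) by lra. lra.
Qed.

Section BlockSwap.
Context {I : Type}.
Variables (Q : I -> Prop) (lo : I -> bool -> R) (len : I -> R).

Definition in_block q b y := lo q b <= y < lo q b + len q.

Definition block_swap (y : R) : R :=
  match excluded_middle_informative
          (exists qb : I * bool, Q (fst qb) /\ in_block (fst qb) (snd qb) y) with
  | left H =>
      let qb := proj1_sig (constructive_indefinite_description _ H) in
      y - lo (fst qb) (snd qb) + lo (fst qb) (negb (snd qb))
  | right _ => y
  end.

Hypothesis blocks_disjoint : forall q q' b b' y, Q q -> Q q' ->
  in_block q b y -> in_block q' b' y -> q = q' /\ b = b'.
Hypothesis block_starts_isolated : forall x, exists e, 0 < e /\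
  forall q b, Q q -> ~ (x < lo q b < x + e).

Lemma block_swap_in q b y :
  Q q -> in_block q b y -> block_swap y = y - lo q b + lo q (negb b).
Proof.
  intros Hq Hy. unfold block_swap.
  destruct excluded_middle_informative as [H|H].
  - destruct (constructive_indefinite_description _ H) as [[q' b'] [Hq' Hy']].
    simpl in *. destruct (blocks_disjoint q' q b' b y) as [-> ->]; auto.
  - exfalso. apply H. now exists (q, b).
Qed.

Lemma block_swap_out y :
  (forall q b, Q q -> ~ in_block q b y) -> block_swap y = y.
Proof.
  intros Hout. unfold block_swap.
  destruct excluded_middle_informative as [[[q b] [Hq Hy]]|_]; [|reflexivity].
  exfalso. exact (Hout q b Hq Hy).
Qed.

Lemma block_swap_involutive y : block_swap (block_swap y) = y.
Proof.
  destruct (classic (exists q b, Q q /\ in_block q b y)) as [[q [b [Hq Hy]]]|Hout].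
  - rewrite (block_swap_in q b y Hq Hy).
    rewrite (block_swap_in q (negb b)); auto.
    + rewrite Bool.negb_involutive. lra.
    + unfold in_block in *. lra.
  - assert (Hy : block_swap y = y)
      by (apply block_swap_out; intros q b Hq Hy; apply Hout; eauto).
    now rewrite !Hy.
Qed.

Lemma block_swap_continuous : sorg_continuous block_swap.
Proof.
  apply sorg_continuous_of_local_translations. intro x.
  destruct (classic (exists q b, Q q /\ in_block q b x)) as [[q [b [Hq Hx]]]|Hout].
  - unfold in_block in Hx.
    exists (lo q b + len q - x), (lo q (negb b) - lo q b). split; [lra|].
    intros y Hy. rewrite (block_swap_in q b y Hq) by (unfold in_block; lra). lra.
  - destruct (block_starts_isolated x) as [e [He Hstart]].
    exists e, 0. split; [exact He|].
    intros y Hy. rewrite block_swap_out; [lra|].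
    intros q b Hq Hqy. apply (Hstart q b Hq).
    destruct (Rle_lt_dec (lo q b) x); [|unfold in_block in Hqy; lra].
    exfalso. apply Hout. exists q, b. unfold in_block in *. split; [auto | lra].
Qed.

Lemma block_swap_homeomorphism : sorg_homeomorphism block_swap.
Proof.
  exists block_swap.
  repeat split; auto using block_swap_involutive, block_swap_continuous.
Qed.

Lemma block_swap_lo q b : Q q -> 0 < len q -> block_swap (lo q b) = lo q (negb b).
Proof.
  intros Hq Hlen. rewrite (block_swap_in q b); [lra | auto | unfold in_block; lra].
Qed.

End BlockSwap.

Lemma sorg_discrete_right_isolated D : sorg_discrete D ->
  forall x, exists e, 0 < e /\ forall y, x < y < x + e -> ~ D y.
Proof.
  intros HD x. destruct (HD x) as [U [HU [Ux Hsub]]].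
  destruct (HU x Ux) as [b [Hb HbU]].
  destruct (classic (exists a, D a /\ x < a < b)) as [[a [Da Ha]]|Hnone].
  - exists (a - x). split; [lra|]. intros y Hy Dy.
    assert (y = a) by (apply Hsub; auto; apply HbU; lra). lra.
  - exists (b - x). split; [lra|].
    intros y Hy Dy. apply Hnone. exists y. split; auto; lra.
Qed.

Lemma sorg_discrete_union_isolation_radius A B :
  sorg_discrete A -> sorg_discrete B ->
  exists r : R -> R, (forall x, 0 < r x) /\
    forall x y, x < y < x + r x -> ~ (A y \/ B y).
Proof.
  intros HA HB.
  assert (Hloc : forall x, exists e, 0 < e /\
            forall y, x < y < x + e -> ~ (A y \/ B y)).
  { intro x.
    destruct (sorg_discrete_right_isolated A HA x) as [eA [HeA HA']].
    destruct (sorg_discrete_right_isolated B HB x) as [eB [HeB HB']].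
    exists (Rmin eA eB). split; [now apply Rmin_pos|].
    pose proof (Rmin_l eA eB). pose proof (Rmin_r eA eB).
    intros y Hy [Ay|By]; [apply (HA' y) | apply (HB' y)]; auto; lra. }
  destruct (choice _ Hloc) as [r Hr].
  exists r. split; intro x; apply Hr.
Qed.

Section Slots.
Variables (D : R -> Prop) (r : R -> R).
Hypothesis r_pos : forall x, 0 < r x.
Hypothesis r_isolates : forall x y, x < y < x + r x -> ~ D y.

Definition slot_lo p (k : bool) := if k then p + r p / 2 else p.

Definition in_slot p k y := slot_lo p k <= y < slot_lo p k + r p / 2.

Lemma isolation_gap p q : D q -> p < q -> p + r p <= q.
Proof.
  intros Dq Hpq. destruct (Rlt_le_dec q (p + r p)) as [H|H]; [|exact H].
  exfalso. apply (r_isolates p q); auto.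
Qed.

Lemma isolation_unique p p' y : D p -> D p' ->
  p <= y < p + r p -> p' <= y < p' + r p' -> p = p'.
Proof.
  intros Dp Dp' Hy Hy'.
  destruct (Rtotal_order p p') as [H|[H|H]]; [|exact H|].
  - pose proof (isolation_gap p p' Dp' H). lra.
  - pose proof (isolation_gap p' p Dp H). lra.
Qed.

Lemma slots_disjoint p p' k k' y : D p -> D p' ->
  in_slot p k y -> in_slot p' k' y -> p = p' /\ k = k'.
Proof.
  intros Dp Dp' Hy Hy'. pose proof (r_pos p). pose proof (r_pos p').
  unfold in_slot, slot_lo in *.
  assert (p = p') as <-
    by (apply (isolation_unique p p' y); auto; destruct k, k'; lra).
  split; [reflexivity|]. destruct k, k'; auto; lra.
Qed.

Lemma slot_starts_isolated x : exists e, 0 < e /\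
  forall p k, D p -> ~ (x < slot_lo p k < x + e).
Proof.
  destruct (classic (exists p, D p /\ p <= x < p + r p / 2)) as [[p [Dp Hp]]|Hnone].
  - exists (Rmin (r x) (p + r p / 2 - x)). split; [apply Rmin_pos; auto; lra|].
    pose proof (Rmin_l (r x) (p + r p / 2 - x)).
    pose proof (Rmin_r (r x) (p + r p / 2 - x)).
    intros p' k Dp' Hstart. pose proof (r_pos p').
    destruct (Rle_lt_dec p' x) as [Hle|Hgt].
    + destruct k; simpl in Hstart; [|lra].
      assert (p' = p) as -> by (apply (isolation_unique p' p x); auto; lra). lra.
    + pose proof (isolation_gap x p' Dp' Hgt). destruct k; simpl in Hstart; lra.
  - exists (r x). split; [apply r_pos|].
    intros p' k Dp' Hstart. pose proof (r_pos p').
    destruct (Rle_lt_dec p' x) as [Hle|Hgt].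
    + destruct k; simpl in Hstart; [|lra].
      apply Hnone. exists p'. split; [auto | lra].
    + pose proof (isolation_gap x p' Dp' Hgt). destruct k; simpl in Hstart; lra.
Qed.

Lemma exists_slot_exchange (I : Type) (Q : I -> Prop)
    (anchor : I -> bool -> R) (side : I -> bool -> bool) :
  (forall q b, Q q -> D (anchor q b)) ->
  (forall q q' b b', Q q -> Q q' ->
     anchor q b = anchor q' b' -> side q b = side q' b' -> q = q' /\ b = b') ->
  exists h, sorg_homeomorphism h /\ forall q b, Q q ->
    h (slot_lo (anchor q b) (side q b)) = slot_lo (anchor q (negb b)) (side q (negb b)).
Proof.
  intros anchor_in_D anchor_inj.
  set (lo q b := slot_lo (anchor q b) (side q b)).
  set (len q := Rmin (r (anchor q false)) (r (anchor q true)) / 2).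
  assert (len_pos : forall q, 0 < len q).
  { intro q. unfold len.
    pose proof (Rmin_pos _ _ (r_pos (anchor q false)) (r_pos (anchor q true))). lra. }
  assert (len_fits : forall q b, len q <= r (anchor q b) / 2).
  { intros q b. unfold len.
    pose proof (Rmin_l (r (anchor q false)) (r (anchor q true))).
    pose proof (Rmin_r (r (anchor q false)) (r (anchor q true))). destruct b; lra. }
  assert (block_in_slot : forall q b y,
            in_block lo len q b y -> in_slot (anchor q b) (side q b) y).
  { intros q b y Hy. pose proof (len_fits q b).
    unfold in_block, in_slot, lo in *. lra. }
  assert (Hdisj : forall q q' b b' y, Q q -> Q q' ->
            in_block lo len q b y -> in_block lo len q' b' y -> q = q' /\ b = b').
  { intros q q' b b' y Hq Hq' Hy Hy'.
    destruct (slots_disjoint (anchor q b) (anchor q' b') (side q b) (side q' b') y)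
      as [Hp Hk]; auto using block_in_slot. }
  assert (Hstarts : forall x, exists e, 0 < e /\
            forall q b, Q q -> ~ (x < lo q b < x + e)).
  { intro x. destruct (slot_starts_isolated x) as [e [He Hx]].
    exists e. split; [exact He|]. intros q b Hq. apply Hx, anchor_in_D, Hq. }
  exists (block_swap Q lo len). split.
  - apply block_swap_homeomorphism; auto.
  - intros q b Hq. apply (block_swap_lo Q lo len Hdisj q b Hq (len_pos q)).
Qed.

End Slots.

Theorem mainTheorem7 : sorgenfrey_sDH.
Proof.
  split; [exact sorg_hausdorff_holds|].
  intros A B f HA HB [fAB [finj _]].
  destruct (sorg_discrete_union_isolation_radius A B HA HB) as [r [r_pos r_iso]].
  destruct (exists_slot_exchange (fun y => A y \/ B y) r r_pos r_iso R A
              (fun a _ => a) (fun _ k => k)) as [sigma [Hsigma Esigma]].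
  { intros a k Ha. now left. }
  { intros a a' k k' _ _ -> ->. auto. }
  destruct (exists_slot_exchange (fun y => A y \/ B y) r r_pos r_iso R A
              (fun a k => if k then f a else a) (fun _ k => negb k)) as [tau [Htau Etau]].
  { intros a [|] Ha; [right; apply fAB | left]; auto. }
  { intros a a' [|] [|] Ha Ha' Hp Hk; simpl in *; try discriminate; auto. }
  exists (fun x => tau (sigma x)). split; [now apply sorg_homeomorphism_comp|].
  intros a Ha. specialize (Esigma a false Ha). specialize (Etau a false Ha).
  simpl in *. now rewrite Esigma.
Qed.
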